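(* Let $\rho$ be the automorphism of $\mathcal A_\theta^{alg}$ with $\rho\cdot U_1=U_2^{-1}$, $\rho\cdot U_2=U_1$, generating a group $\mathbb Z_4$. Let $H^0(\mathcal A_\theta^{alg},{}_{\rho}\mathcal A_\theta^{alg\ast})$ be the space of formal series $\varphi=\sum\varphi_{n,m}U_1^nU_2^m$ with $(\rho\cdot a)\varphi=\varphi a$ for all $a\in\mathcal A_\theta^{alg}$, with $\mathbb Z_4$ acting by applying $\rho$ termwise. Then $H^0(\mathcal A_\theta^{alg},{}_{\rho}\mathcal A_\theta^{alg\ast})^{\mathbb Z_4}\cong\mathbb C^2$.
   Context: Let $\theta\in\mathbb R\setminus\mathbb Q$, $\lambda=e^{2\pi i\theta}$. $\mathcal A_\theta^{alg}$ is the complex algebra of finite sums $\sum a_{n,m}U_1^nU_2^m$ with $U_1,U_2$ invertible and $U_2U_1=\lambda U_1U_2$; formal series $\sum_{(n,m)\in\mathbb Z^2}\varphi_{n,m}U_1^nU_2^m$ with arbitrary coefficients form an $\mathcal A_\theta^{alg}$-bimodule via multiplication. Termwise action: $\rho\cdot\sum\varphi_{n,m}U_1^nU_2^m=\sum\varphi_{n,m}\,\rho\cdot(U_1^nU_2^m)$. *)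

From mathcomp Require Import all_boot all_order all_algebra.
From mathcomp Require Import reals trigo.
From mathcomp Require Import complex.
Set Implicit Arguments. Unset Strict Implicit. Unset Printing Implicit Defensive.
Import Order.TTheory GRing.Theory Num.Theory.
Local Open Scope ring_scope.

Section NCTorus.
Variable R : realType.
Variable theta : R.

Definition lam : R[i] := Complex (cos (2 * pi * theta)) (sin (2 * pi * theta)).

(** An element of A_theta^alg, written as a finite sum
    sum_k c_k U1^(p_k) U2^(q_k): a finite list of terms ((p,q), c). *)
Definition alg_el := seq ((int * int) * R[i]).

(** Formal series sum_{(n,m)} phi(n,m) U1^n U2^m with arbitrary coefficients. *)
Definition fseries := int -> int -> R[i].

(** Left multiplication a * phi, using U2^q U1^n = lam^(q n) U1^n U2^q :
    c U1^p U2^q * phi(n',m') U1^n' U2^m' = c lam^(q n') phi(n',m') U1^(p+n') U2^(q+m'). *)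
Definition lmul (a : alg_el) (phi : fseries) : fseries :=
  fun n m => \sum_(t <- a)
     t.2 * lam ^ (t.1.2 * (n - t.1.1)) * phi (n - t.1.1) (m - t.1.2).

(** Right multiplication phi * a:
    phi(n',m') U1^n' U2^m' * c U1^p U2^q = c lam^(m' p) phi(n',m') U1^(n'+p) U2^(m'+q). *)
Definition rmul (phi : fseries) (a : alg_el) : fseries :=
  fun n m => \sum_(t <- a)
     t.2 * lam ^ ((m - t.1.2) * t.1.1) * phi (n - t.1.1) (m - t.1.2).

(** The automorphism rho : U1 |-> U2^-1, U2 |-> U1, on monomials:
    rho(U1^n U2^m) = U2^(-n) U1^m = lam^(-n m) U1^m U2^(-n). *)
Definition rho_alg (a : alg_el) : alg_el :=
  [seq ((t.1.2, - t.1.1), t.2 * lam ^ (- (t.1.1 * t.1.2))) | t <- a].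

(** Termwise action of rho on formal series:
    rho . sum phi(n,m) U1^n U2^m = sum phi(n,m) lam^(-n m) U1^m U2^(-n),
    so the coefficient of U1^p U2^q is phi(-q,p) lam^(q p). *)
Definition rho_ser (phi : fseries) : fseries :=
  fun p q => lam ^ (q * p) * phi (- q) p.

Definition H0_rho (phi : fseries) : Prop :=
  forall a : alg_el, lmul (rho_alg a) phi = rmul phi a.

Definition rho_invariant (phi : fseries) : Prop := rho_ser phi = phi.

Definition H0_rho_Z4 (phi : fseries) : Prop := H0_rho phi /\ rho_invariant phi.

End NCTorus.

(* Testing the defining identity
   on the monomials U2^q and U1^p shows that its coefficient at (n, m) only depends on
   k = n + m, and that shifting k by 2 multiplies it by an explicit power of lambda;
   hence it is fixed by its values at k = 0 and k = 1. Conversely the two series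
   supported on even, resp. odd, diagonals with coefficient lambda^(floor(k^2/4)) are
   invariant, and rho-invariance of them holds automatically. *)
From mathcomp Require Import all_boot all_order all_algebra.
From mathcomp Require Import reals trigo.
From mathcomp Require Import complex.
From mathcomp Require Import boolp.
From mathcomp Require Import ring zify.
Import Order.TTheory GRing.Theory Num.Theory.
Local Open Scope ring_scope.

Section InvariantFunctionals.
Variable R : realType.
Variable theta : R.

Local Notation lam := (lam theta).

Lemma lam_unit : lam \is a GRing.unit.
Proof.
rewrite unitfE /lam; apply/eqP => /eqP.
rewrite eq_complex /= => /andP [/eqP c0 /eqP s0].
have := cos2Dsin2 (2 * pi * theta); rewrite c0 s0 expr0n /= addr0 => /eqP.
by rewrite eq_sym oner_eq0.
Qed.

Lemma lamzD (x y : int) : lam ^ x * lam ^ y = lam ^ (x + y).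
Proof. by rewrite exprzDr // lam_unit. Qed.

Lemma H0_rho_monoP (phi : fseries R) :
  H0_rho theta phi <->
  forall p q n m : int,
    lam ^ (- (p * q)) * lam ^ (- p * (n - q)) * phi (n - q) (m + p)
    = lam ^ ((m - q) * p) * phi (n - p) (m - q).
Proof.
split=> [H p q n m | H a].
  have := congr1 (fun f => f n m) (H [:: ((p, q), 1)]).
  by rewrite /lmul /rmul /rho_alg /= !big_cons !big_nil /= !addr0 !mul1r opprK.
apply: funext => n; apply: funext => m.
rewrite /lmul /rmul /rho_alg big_map; apply: eq_bigr => [[[p q] c]] _ /=.
by rewrite opprK -[in RHS]mulrA -H !mulrA.
Qed.

Section Relations.
Variable phi : fseries R.
Hypothesis phi_H0 : H0_rho theta phi.

Lemma H0_rho_diag (n m : int) : phi n m = phi (n + m) 0.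
Proof.
have := (H0_rho_monoP phi).1 phi_H0 0 m (n + m) m.
rewrite !(mul0r, mulr0, oppr0, expr0z, mul1r, addr0, subr0, subrr).
by rewrite addrK.
Qed.

Lemma H0_rho_shift2 (k p : int) :
  phi (k + 2 * p) 0 = lam ^ (p * (k + p)) * phi k 0.
Proof.
have := (H0_rho_monoP phi).1 phi_H0 p 0 (k + p) 0.
rewrite !(mul0r, mulr0, oppr0, expr0z, mul1r, add0r, subr0) addrK H0_rho_diag.
move=> E; rewrite -E mulrA lamzD.
have -> : p * (k + p) + - p * (k + p) = 0 by ring.
by rewrite expr0z mul1r; congr (phi _ 0); ring.
Qed.

End Relations.

Definition quarter_sq (k : int) : int := ((k * k) %/ 4)%Z.

Lemma quarter_sqD (k p : int) : quarter_sq (k + 2 * p) = quarter_sq k + p * (k + p).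
Proof.
rewrite /quarter_sq.
have -> : (k + 2 * p) * (k + 2 * p) = (p * (k + p)) * 4 + k * k by ring.
by rewrite divzMDl // addrC.
Qed.

Definition diag_coef (b k : int) : R[i] :=
  if (k %% 2)%Z == b then lam ^ quarter_sq k else 0.

Definition parity_series (b : int) : fseries R := fun n m => diag_coef b (n + m).

Lemma diag_coefD (b k p : int) :
  diag_coef b (k + 2 * p) = lam ^ (p * (k + p)) * diag_coef b k.
Proof.
rewrite /diag_coef.
have -> : ((k + 2 * p) %% 2)%Z = (k %% 2)%Z by rewrite addrC mulrC modzMDl.
by case: ifP => _; rewrite ?mulr0 // quarter_sqD lamzD addrC.
Qed.

Lemma parity_series_H0_Z4 (b : int) : H0_rho_Z4 theta (parity_series b).
Proof.
split.
  apply/H0_rho_monoP => p q n m; rewrite /parity_series.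
  have -> : n - q + (m + p) = n - p + (m - q) + 2 * p by ring.
  rewrite diag_coefD !mulrA !lamzD.
  by congr (lam ^ _ * _); ring.
apply: funext => p; apply: funext => q; rewrite /rho_ser /parity_series.
have -> : p + q = - q + p + 2 * q by ring.
by rewrite diag_coefD; congr (lam ^ _ * _); ring.
Qed.

Lemma diag_coef_base :
  [/\ diag_coef 0 0 = 1, diag_coef 1 0 = 0, diag_coef 0 1 = 0 & diag_coef 1 1 = 1].
Proof. by rewrite /diag_coef /= expr0z. Qed.

Lemma H0_rho_span (phi : fseries R) : H0_rho theta phi ->
  phi = (fun n m => phi 0 0 * parity_series 0 n m + phi 1 0 * parity_series 1 n m).
Proof.
move=> H; apply: funext => n; apply: funext => m.
rewrite H0_rho_diag // /parity_series.
set k := n + m.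
have -> : k = (k %% 2)%Z + 2 * (k %/ 2)%Z by rewrite [LHS](divz_eq k 2) addrC mulrC.
rewrite H0_rho_shift2 // !diag_coefD.
have : (0 <= (k %% 2)%Z) && ((k %% 2)%Z < 2) by rewrite modz_ge0 // ltz_pmod.
move=> /andP [r_ge0 r_lt2]; have [->|->] : (k %% 2)%Z = 0 \/ (k %% 2)%Z = 1 by lia.
all: case: diag_coef_base => e00 e10 e01 e11.
- by rewrite e00 e10; ring.
- by rewrite e01 e11; ring.
Qed.

End InvariantFunctionals.

Theorem mainTheorem6 (R : realType) (theta : R) :
  @reals.irrational R theta ->
  exists phi1 phi2 : fseries R,
    H0_rho_Z4 theta phi1 /\ H0_rho_Z4 theta phi2 /\
    (forall phi : fseries R, H0_rho_Z4 theta phi ->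
       exists! c : R[i] * R[i],
         phi = (fun n m => c.1 * phi1 n m + c.2 * phi2 n m)).
Proof.
move=> _.
exists (parity_series R theta 0), (parity_series R theta 1).
split; first exact: parity_series_H0_Z4.
split; first exact: parity_series_H0_Z4.
move=> phi [phi_H0 _]; exists (phi 0 0, phi 1 0).
split; first exact: H0_rho_span.
move=> [c1 c2] /= E; rewrite E.
have [e00 e10 e01 e11] := diag_coef_base R theta.
by rewrite /parity_series !addr0 e00 e10 e01 e11 mulr0 mulr1 addr0 mulr0 mulr1 add0r.
Qed.
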